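(* Let $R>0$ and $\Theta=(\alpha,\rho_r,\rho_d,\rho_s,\rho_0,T)$ with $\alpha>1$, $\rho_r,\rho_d,\rho_s,\rho_0>0$, $T>1$; set $\beta=\rho_d/\rho_r$, $\delta=\rho_s/\rho_r$, $\mu=\rho_0/\rho_r$, $K_{max}(\Theta)=\min\big(\frac T4,\frac1{3\mu},\frac{3\beta}{2\mu}\big)$. Suppose $K_{max}(\Theta)>10$, $\rho_r>\frac{\alpha}{2\delta}$, $\rho_r>\frac{3\alpha}{4(1+\beta)^2R}g^2\big(\frac{4R}{3K_{max}(\Theta)}\big)$ and $\rho_r<\frac{\alpha}{(1+\beta)^2}\frac{g^2(R)}{R}$. Then $$\zeta'_{zf}(R,\Theta)>\frac38\,\zeta'_{csi}\Big(\frac{4R}{3},\Theta\Big)>\frac38\,\zeta'_{csi}(R,\Theta).$$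
   Context: $g(x)=\sqrt{\frac{x}{2^x-1}}\big(2^x x\ln2-2^x+1\big)$, $x>0$. For rate $r>0$ and reals $M>K$, $1\le K\le\tau<T$, $$\gamma_u=\frac{K+\tau}{2\tau(M-K)}\Big(2^{\frac{r}{K(1-\tau/T)}}-1\Big)+\sqrt{\Big(\frac{K+\tau}{2\tau(M-K)}\Big(2^{\frac{r}{K(1-\tau/T)}}-1\Big)\Big)^2+\frac{2^{\frac{r}{K(1-\tau/T)}}-1}{\tau(M-K)}},$$ $$\frac{r}{\zeta_{zf}(M,K,\tau,r,\Theta)}=\alpha K\gamma_u+\rho_s+K\Big(\rho_d+\frac{8K^2\rho_0}{3T}\Big)+M\Big(\rho_r+2K\rho_0+\frac{4K^2\rho_0}{T}\Big).$$ $\zeta'_{zf}(r,\Theta)$ is the supremum of $\zeta_{zf}$ over real $(M,K,\tau)$ with $1\le K\le K_{max}(\Theta)$, $K\le\tau<T$, $M>K$. For real $M>K\ge1$, $\frac{1}{\zeta_{csi}(M,K,r,\Theta)}=\frac1r\big[\frac{\alpha K}{M-K}(2^{r/K}-1)+M\rho_r+K\rho_d+\rho_s\big]$ and $\zeta'_{csi}(r,\Theta)$ is its maximum over real $(M,K)$ with $1\le K\le K_{max}(\Theta)$, $M>K$. *)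

From Stdlib Require Import Reals.
From Coquelicot Require Import Coquelicot.
Open Scope R_scope.

Definition pow2 (x : R) : R := Rpower 2 x.

Definition g (x : R) : R :=
  sqrt (x / (pow2 x - 1)) * (pow2 x * x * ln 2 - pow2 x + 1).

Record Theta := mkTheta {
  alpha : R; rho_r : R; rho_d : R; rho_s : R; rho_0 : R; TT : R }.

Definition beta (th : Theta) : R := rho_d th / rho_r th.
Definition delta (th : Theta) : R := rho_s th / rho_r th.
Definition mu (th : Theta) : R := rho_0 th / rho_r th.

Definition Kmax (th : Theta) : R :=
  Rmin (TT th / 4) (Rmin (1 / (3 * mu th)) (3 * beta th / (2 * mu th))).

Definition gamma_u (M K tau T r : R) : R :=
  let c := (K + tau) / (2 * tau * (M - K)) * (pow2 (r / (K * (1 - tau / T))) - 1) in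
  c + sqrt (c ^ 2 + (pow2 (r / (K * (1 - tau / T))) - 1) / (tau * (M - K))).

Definition zeta_zf (M K tau r : R) (th : Theta) : R :=
  let T := TT th in
  r / (alpha th * K * gamma_u M K tau T r + rho_s th
       + K * (rho_d th + 8 * K ^ 2 * rho_0 th / (3 * T))
       + M * (rho_r th + 2 * K * rho_0 th + 4 * K ^ 2 * rho_0 th / T)).

Definition zeta_csi (M K r : R) (th : Theta) : R :=
  r / (alpha th * K / (M - K) * (pow2 (r / K) - 1)
       + M * rho_r th + K * rho_d th + rho_s th).

Definition zeta_zf' (r : R) (th : Theta) : Rbar :=
  Lub_Rbar (fun z => exists M K tau,
    1 <= K /\ K <= Kmax th /\ K <= tau /\ tau < TT th /\ M > K /\
    z = zeta_zf M K tau r th).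

(* zeta'_csi : maximum (taken as supremum) over real (M,K), 1<=K<=Kmax, M>K *)
Definition zeta_csi' (r : R) (th : Theta) : Rbar :=
  Lub_Rbar (fun z => exists M K,
    1 <= K /\ K <= Kmax th /\ M > K /\ z = zeta_csi M K r th).

From Pilot Require Import Defs.
From Stdlib Require Import Reals Lra Psatz Classical.
From Coquelicot Require Import Coquelicot.
(* [Defs.pow2] must shadow Coquelicot's [pow2]. *)
Import Defs.
Open Scope R_scope.

(* Both inequalities compare suprema of ratios [rate / denominator], and each
   follows from a pointwise comparison of denominators with a uniform gain.
   For the first, taking [tau = T/4] and bounding [gamma_u] shows that the
   zero-forcing denominator at rate [R] is at most twice the CSI denominator at
   rate [4R/3], minus [rho_s - alpha/2 > 0].  For the second, rescaling
   [(M, K)] by [4/3] turns a CSI point at rate [R] into one at rate [4R/3]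
   whose denominator is [4/3] of the original minus at least [rho_s/3]; when
   [4K/3] exceeds [Kmax], the lower bound on [rho_r] makes the CSI denominator,
   optimised over [M], increasing in [K] beyond [Kmax], so [K = Kmax] does at
   least as well. *)

Lemma Lub_Rbar_ge (E : R -> Prop) (z : R) : E z -> Rbar_le z (Lub_Rbar E).
Proof. intros Hz. now apply (proj1 (Lub_Rbar_correct E)). Qed.

Lemma Lub_Rbar_finite (E : R -> Prop) (z0 B : R) :
  E z0 -> (forall z, E z -> z <= B) -> exists s, Lub_Rbar E = Finite s /\ z0 <= s.
Proof.
  intros Hz0 HB.
  assert (Hle : Rbar_le (Lub_Rbar E) B).
  { apply (proj2 (Lub_Rbar_correct E)). intros z Hz. now apply HB. }
  pose proof (Lub_Rbar_ge E z0 Hz0) as Hge.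
  destruct (Lub_Rbar E) as [s| |]; simpl in *; try contradiction.
  now exists s.
Qed.

Lemma Lub_Rbar_approx (E : R -> Prop) (s t : R) :
  Lub_Rbar E = Finite s -> t < s -> exists z, E z /\ t < z.
Proof.
  intros Hs Hts. apply NNPP. intros Hno.
  assert (Hle : Rbar_le (Lub_Rbar E) t).
  { apply (proj2 (Lub_Rbar_correct E)). intros z Hz. simpl.
    apply Rnot_lt_le. intros Hlt. apply Hno. now exists z. }
  rewrite Hs in Hle. simpl in Hle. lra.
Qed.

(* The uniform gain [eps] is what makes the comparison of suprema strict. *)
Lemma Lub_Rbar_lt_of_den_gain (E1 E2 : R -> Prop) (s r1 r2 c eps : R) :
  Lub_Rbar E1 = Finite s -> 0 < s -> 0 < r1 -> 0 < r2 -> 0 < c -> 0 < eps ->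
  (forall z, E1 z -> 0 < z -> exists D',
     E2 (r2 / D') /\ 0 < D' /\ D' <= c * (r1 / z) - eps) ->
  Rbar_lt (r2 / (c * r1) * s) (Lub_Rbar E2).
Proof.
  intros Hs hs hr1 hr2 hc heps Hgain.
  set (t := c * r1 * s / (c * r1 + eps * s)).
  assert (hcr : 0 < c * r1) by nra.
  assert (ht : 0 < t) by (unfold t; apply Rdiv_lt_0_compat; nra).
  assert (hts : t < s).
  { unfold t. apply Rlt_div_l; [nra|].
    assert (0 < eps * s * s) by (repeat apply Rmult_lt_0_compat; lra). nra. }
  destruct (Lub_Rbar_approx E1 s t Hs hts) as [z [Hz htz]].
  destruct (Hgain z Hz ltac:(lra)) as [D' [HD' [hD' hD'z]]].
  assert (hDs : D' < c * r1 / s).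
  { assert (c * r1 < (c * r1 / s + eps) * z).
    { apply (Rmult_lt_reg_r s); [lra|].
      replace ((c * r1 / s + eps) * z * s) with ((c * r1 + eps * s) * z) by (field; lra).
      unfold t in htz. apply Rlt_div_l in htz; nra. }
    replace (c * (r1 / z)) with (c * r1 / z) in hD'z by (field; lra).
    apply Rlt_div_l in H; [|lra]. lra. }
  apply Rbar_lt_le_trans with (Finite (r2 / D')); [|now apply Lub_Rbar_ge].
  simpl. replace (r2 / (c * r1) * s) with (r2 / (c * r1 / s)) by (field; lra).
  apply Rmult_lt_compat_l; [lra|]. apply Rinv_lt_contravar; [nra|lra].
Qed.

Definition den_csi (M K r : R) (th : Theta) : R :=
  alpha th * K / (M - K) * (pow2 (r / K) - 1)
  + M * rho_r th + K * rho_d th + rho_s th.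

Definition den_zf (M K tau r : R) (th : Theta) : R :=
  alpha th * K * gamma_u M K tau (TT th) r + rho_s th
  + K * (rho_d th + 8 * K ^ 2 * rho_0 th / (3 * TT th))
  + M * (rho_r th + 2 * K * rho_0 th + 4 * K ^ 2 * rho_0 th / TT th).

Lemma zeta_csiE (M K r : R) (th : Theta) : zeta_csi M K r th = r / den_csi M K r th.
Proof. reflexivity. Qed.

Lemma zeta_zfE (M K tau r : R) (th : Theta) : zeta_zf M K tau r th = r / den_zf M K tau r th.
Proof. reflexivity. Qed.

Lemma ln2_pos : 0 < ln 2.
Proof. rewrite <- ln_1. apply ln_increasing; lra. Qed.

Lemma pow2_exp (t : R) : pow2 t = exp (t * ln 2).
Proof. reflexivity. Qed.

Lemma pow2_ge1 (t : R) : 0 <= t -> 1 <= pow2 t.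
Proof.
  intros ht. rewrite pow2_exp.
  pose proof (exp_ineq1_le (t * ln 2)). pose proof ln2_pos. nra.
Qed.

Lemma pow2_gt1 (t : R) : 0 < t -> 1 < pow2 t.
Proof.
  intros ht. rewrite pow2_exp.
  pose proof (exp_ineq1 (t * ln 2)). pose proof ln2_pos.
  assert (0 < t * ln 2) by nra. lra.
Qed.

Lemma Kmax_bounds (th : Theta) (K : R) :
  rho_r th > 0 -> rho_d th > 0 -> rho_0 th > 0 -> K <= Kmax th ->
  4 * K <= TT th /\ 3 * K * rho_0 th <= rho_r th /\ 2 * K * rho_0 th <= 3 * rho_d th.
Proof.
  intros hr hd h0 HK. unfold Kmax, mu, beta in HK.
  replace (1 / (3 * (rho_0 th / rho_r th))) with (rho_r th / (3 * rho_0 th)) in HK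
    by (field; lra).
  replace (3 * (rho_d th / rho_r th) / (2 * (rho_0 th / rho_r th)))
    with (3 * rho_d th / (2 * rho_0 th)) in HK by (field; lra).
  pose proof (Rle_trans _ _ _ HK (Rmin_l _ _)) as H1.
  pose proof (Rle_trans _ _ _ HK (Rmin_r _ _)) as H23.
  pose proof (Rle_trans _ _ _ H23 (Rmin_l _ _)) as H2.
  pose proof (Rle_trans _ _ _ H23 (Rmin_r _ _)) as H3.
  apply Rle_div_r in H2; [|lra]. apply Rle_div_r in H3; [|lra].
  repeat split; lra.
Qed.

Lemma den_csi_ge_rho_s (th : Theta) (M K r : R) :
  alpha th > 0 -> rho_r th > 0 -> rho_d th > 0 -> 0 < K -> M > K -> 0 <= r ->
  rho_s th <= den_csi M K r th.
Proof.
  intros ha hr hd hK hMK hr0. unfold den_csi.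
  pose proof (pow2_ge1 (r / K) ltac:(apply Rdiv_le_0_compat; lra)).
  assert (0 <= alpha th * K / (M - K)) by (apply Rdiv_le_0_compat; nra).
  nra.
Qed.

Lemma gamma_u_bounds (M K tau T r : R) :
  0 < K -> K <= tau -> tau < T -> M > K -> 0 <= r ->
  0 <= gamma_u M K tau T r <=
  2 * ((pow2 (r / (K * (1 - tau / T))) - 1) / (M - K)) + 1 / (2 * tau).
Proof.
  intros hK hKt htT hMK hr. unfold gamma_u.
  set (S := pow2 (r / (K * (1 - tau / T))) - 1).
  assert (hS : 0 <= S).
  { assert (tau / T < 1) by (apply Rlt_div_l; lra).
    pose proof (pow2_ge1 (r / (K * (1 - tau / T)))
                  ltac:(apply Rdiv_le_0_compat; nra)). unfold S. lra. }
  set (x := S / (M - K)).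
  assert (hx : 0 <= x) by (apply Rdiv_le_0_compat; lra).
  set (c := (K + tau) / (2 * tau * (M - K)) * S).
  assert (hcx : 0 <= c <= x).
  { replace c with ((K + tau) / (2 * tau) * x) by (unfold c, x; field; lra).
    assert ((K + tau) / (2 * tau) <= 1) by (apply Rle_div_l; lra).
    assert (0 <= (K + tau) / (2 * tau)) by (apply Rdiv_le_0_compat; lra).
    split; nra. }
  replace (S / (tau * (M - K))) with (x / tau) by (unfold x; field; lra).
  assert (hsq : sqrt (c ^ 2 + x / tau) <= x + 1 / (2 * tau)).
  { assert (0 < 1 / (2 * tau)) by (apply Rdiv_lt_0_compat; lra).
    rewrite <- (sqrt_pow2 (x + 1 / (2 * tau))) by lra.
    apply sqrt_le_1_alt.
    replace ((x + 1 / (2 * tau)) ^ 2) with (x ^ 2 + x / tau + 1 / (4 * tau ^ 2))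
      by (field; lra).
    assert (0 < 1 / (4 * tau ^ 2)) by (apply Rdiv_lt_0_compat; nra). nra. }
  pose proof (sqrt_pos (c ^ 2 + x / tau)). lra.
Qed.

Lemma den_zf_quarter_le (th : Theta) (M K r : R) :
  alpha th > 0 -> rho_r th > 0 -> rho_d th > 0 -> rho_s th > 0 -> rho_0 th > 0 ->
  0 < K -> K <= Kmax th -> M > K -> 0 <= r ->
  0 < den_zf M K (TT th / 4) r th /\
  den_zf M K (TT th / 4) r th <= 2 * den_csi M K (4 * r / 3) th - (rho_s th - alpha th / 2).
Proof.
  intros ha hr hd hs h0 hK hKm hMK hr0.
  destruct (Kmax_bounds th K hr hd h0 hKm) as [hT [hKr hKd]].
  destruct (gamma_u_bounds M K (TT th / 4) (TT th) r hK ltac:(lra) ltac:(lra) hMK hr0)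
    as [hg0 hg].
  replace (r / (K * (1 - TT th / 4 / TT th))) with (4 * r / 3 / K) in hg
    by (field; lra).
  set (x := (pow2 (4 * r / 3 / K) - 1) / (M - K)) in hg.
  assert (hgam : alpha th * K * gamma_u M K (TT th / 4) (TT th) r
                 <= 2 * (alpha th * K * x) + alpha th / 2).
  { assert (alpha th * K * gamma_u M K (TT th / 4) (TT th) r
            <= alpha th * K * (2 * x + 1 / (2 * (TT th / 4))))
      by (apply Rmult_le_compat_l; nra).
    assert (alpha th * K * (1 / (2 * (TT th / 4))) <= alpha th / 2).
    { replace (alpha th * K * (1 / (2 * (TT th / 4)))) with (alpha th * (2 * K / TT th))
        by (field; lra).
      assert (2 * K / TT th <= 1 / 2) by (apply Rle_div_l; lra). nra. }
    nra. }
  assert (hd3 : 0 <= 8 * K ^ 2 * rho_0 th / (3 * TT th) <= rho_d th).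
  { split; [apply Rdiv_le_0_compat; nra|].
    apply Rle_div_l; [lra|].
    assert (4 * K * (2 * K * rho_0 th) <= TT th * (3 * rho_d th))
      by (apply Rmult_le_compat; nra). nra. }
  assert (hr3 : 0 <= 4 * K ^ 2 * rho_0 th / TT th <= K * rho_0 th).
  { split; [apply Rdiv_le_0_compat; nra|].
    apply Rle_div_l; [lra|].
    assert (4 * K * (K * rho_0 th) <= TT th * (K * rho_0 th))
      by (apply Rmult_le_compat_r; nra). nra. }
  unfold den_zf, den_csi.
  replace (alpha th * K / (M - K) * (pow2 (4 * r / 3 / K) - 1)) with (alpha th * K * x)
    by (unfold x; field; lra).
  assert (0 <= alpha th * K * gamma_u M K (TT th / 4) (TT th) r) by (apply Rmult_le_pos; nra).
  assert (0 <= K * (rho_d th + 8 * K ^ 2 * rho_0 th / (3 * TT th)) <= 2 * K * rho_d th)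
    by (split; nra).
  assert (0 < M * (rho_r th + 2 * K * rho_0 th + 4 * K ^ 2 * rho_0 th / TT th)
            <= 2 * M * rho_r th) by (split; nra).
  split; lra.
Qed.

Lemma den_csi_scale_le (th : Theta) (M K r l : R) :
  alpha th > 0 -> 0 < K -> M > K -> 0 <= r -> 1 <= l ->
  den_csi (l * M) (l * K) (l * r) th <= l * den_csi M K r th - (l - 1) * rho_s th.
Proof.
  intros ha hK hMK hr hl. unfold den_csi.
  replace (l * r / (l * K)) with (r / K) by (field; lra).
  replace (alpha th * (l * K) / (l * M - l * K)) with (alpha th * K / (M - K))
    by (field; split; nra).
  pose proof (pow2_ge1 (r / K) ltac:(apply Rdiv_le_0_compat; lra)).
  assert (0 <= alpha th * K / (M - K)) by (apply Rdiv_le_0_compat; nra).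
  assert (0 <= (l - 1) * (alpha th * K / (M - K) * (pow2 (r / K) - 1)))
    by (apply Rmult_le_pos; [|apply Rmult_le_pos]; lra).
  lra.
Qed.

Lemma two_sqrt_mul_le (a b x : R) :
  0 <= a -> 0 <= b -> 0 < x -> 2 * sqrt a * sqrt b <= a / x + x * b.
Proof.
  intros ha hb hx.
  pose proof (sqrt_sqrt a ha) as Ha. pose proof (sqrt_sqrt b hb) as Hb.
  set (sa := sqrt a) in *. set (sb := sqrt b) in *.
  replace (a / x + x * b) with (2 * sa * sb + (sa - x * sb) ^ 2 / x)
    by (rewrite <- Ha, <- Hb; field; lra).
  assert (0 <= (sa - x * sb) ^ 2 / x)
    by (apply Rdiv_le_0_compat; [apply pow2_ge_0|lra]).
  lra.
Qed.

(* The minimum of [den_csi M K r] over [M > K], minus [rho_s], for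
   [a = alpha], [rr = rho_r], [b = rho_r + rho_d]. *)
Definition den_csi_opt (a rr b r k : R) : R :=
  2 * sqrt (a * k * (pow2 (r / k) - 1)) * sqrt rr + k * b.

Lemma den_csi_ge_opt (th : Theta) (M K r : R) :
  alpha th > 0 -> rho_r th > 0 -> 0 < K -> M > K -> 0 <= r ->
  den_csi_opt (alpha th) (rho_r th) (rho_r th + rho_d th) r K + rho_s th
  <= den_csi M K r th.
Proof.
  intros ha hr hK hMK hr0. unfold den_csi_opt, den_csi.
  pose proof (pow2_ge1 (r / K) ltac:(apply Rdiv_le_0_compat; lra)).
  pose proof (two_sqrt_mul_le (alpha th * K * (pow2 (r / K) - 1)) (rho_r th) (M - K)
                ltac:(apply Rmult_le_pos; nra) ltac:(lra) ltac:(lra)).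
  replace (alpha th * K / (M - K) * (pow2 (r / K) - 1))
    with (alpha th * K * (pow2 (r / K) - 1) / (M - K)) by (field; lra).
  nra.
Qed.

Lemma den_csi_opt_attained (th : Theta) (K r : R) :
  alpha th > 0 -> rho_r th > 0 -> 0 < K -> 0 < r ->
  exists M, M > K /\
    den_csi M K r th = den_csi_opt (alpha th) (rho_r th) (rho_r th + rho_d th) r K + rho_s th.
Proof.
  intros ha hr hK hr0.
  pose proof (pow2_gt1 (r / K) ltac:(apply Rdiv_lt_0_compat; lra)).
  set (A := alpha th * K * (pow2 (r / K) - 1)).
  assert (hA : 0 < A) by (apply Rmult_lt_0_compat; nra).
  pose proof (sqrt_lt_R0 A hA) as hsa. pose proof (sqrt_lt_R0 _ hr) as hsr.
  pose proof (sqrt_sqrt A (Rlt_le _ _ hA)) as Hsa.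
  pose proof (sqrt_sqrt _ (Rlt_le _ _ hr)) as Hsr.
  set (sa := sqrt A) in *. set (sr := sqrt (rho_r th)) in *.
  (* equality case of AM-GM: [M - K = sqrt (A / rho_r)] *)
  exists (K + sa / sr). split.
  - assert (0 < sa / sr) by (apply Rdiv_lt_0_compat; lra). lra.
  - unfold den_csi, den_csi_opt. fold A sa sr.
    replace (alpha th * K / (K + sa / sr - K) * (pow2 (r / K) - 1)) with (A * sr / sa)
      by (unfold A; field; lra).
    rewrite <- Hsa, <- Hsr. field. lra.
Qed.

Definition g_sq_ln2 (y : R) : R := y * (y * exp y - exp y + 1) ^ 2 / (exp y - 1).

Lemma exp_lower_bounds (y : R) : 0 < y -> 1 + y < exp y /\ 0 < y * exp y - exp y + 1.
Proof.
  intros hy. split; [apply exp_ineq1; lra|].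
  assert (Hinv : exp y * exp (- y) = 1)
    by (rewrite <- exp_plus, Rplus_opp_r; apply exp_0).
  pose proof (exp_ineq1 (- y) ltac:(lra)).
  assert (exp y * (1 - y) < exp y * exp (- y)) by (apply Rmult_lt_compat_l; [apply exp_pos|lra]).
  lra.
Qed.

Lemma g_sqE (s : R) : 0 < s -> g s ^ 2 = g_sq_ln2 (s * ln 2) / ln 2.
Proof.
  intros hs. pose proof ln2_pos.
  unfold g, g_sq_ln2. rewrite pow2_exp.
  assert (hy : 0 < s * ln 2) by nra.
  destruct (exp_lower_bounds (s * ln 2) hy) as [he _].
  set (e := exp (s * ln 2)) in *.
  pose proof (sqrt_sqrt (s / (e - 1)) ltac:(apply Rdiv_le_0_compat; lra)) as Hq.
  set (q := sqrt (s / (e - 1))) in *.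
  replace ((q * (e * s * ln 2 - e + 1)) ^ 2) with (q * q * (e * s * ln 2 - e + 1) ^ 2)
    by ring.
  rewrite Hq. field. lra.
Qed.

Lemma g_sq_ln2_le (y1 y2 : R) : 0 < y1 -> y1 <= y2 -> g_sq_ln2 y1 <= g_sq_ln2 y2.
Proof.
  intros h1 h12.
  destruct (Rle_lt_or_eq_dec _ _ h12) as [hlt|<-]; [apply Rlt_le|lra].
  apply (incr_function g_sq_ln2 (Finite 0) p_infty
    (fun y => let e := exp y in let u := y * e - e + 1 in
       u * (2 * y ^ 2 * e * (e - 1) - u ^ 2) / (e - 1) ^ 2)); simpl; try lra; auto.
  - intros y hy _. unfold g_sq_ln2.
    destruct (exp_lower_bounds y hy).
    auto_derive; [lra|field; lra].
  - intros y hy _.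
    destruct (exp_lower_bounds y hy) as [he hu].
    set (e := exp y) in *. set (u := y * e - e + 1) in *.
    (* [0 < u < y e] and [u <= 2 y (e - 1)] give [u^2 < 2 y^2 e (e - 1)] *)
    assert (u < y * e) by (unfold u; lra).
    assert (u <= 2 * y * (e - 1)) by (unfold u; nra).
    assert (u * u < u * (y * e)) by nra.
    assert (u * (y * e) <= 2 * y * (e - 1) * (y * e)) by (apply Rmult_le_compat_r; nra).
    apply Rdiv_lt_0_compat; nra.
Qed.

Lemma g_sq_le (s1 s2 : R) : 0 < s1 -> s1 <= s2 -> g s1 ^ 2 <= g s2 ^ 2.
Proof.
  intros h1 h12. pose proof ln2_pos.
  rewrite (g_sqE s1), (g_sqE s2) by lra.
  apply Rmult_le_compat_r; [apply Rlt_le, Rinv_0_lt_compat; lra|].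
  apply g_sq_ln2_le; nra.
Qed.

Lemma den_csi_opt_lt (a rr b r k1 k2 : R) :
  0 < a -> 0 < rr -> 0 < b -> 0 < r -> 0 < k1 -> k1 < k2 ->
  g (r / k1) ^ 2 < b ^ 2 * r / (a * rr) ->
  den_csi_opt a rr b r k1 < den_csi_opt a rr b r k2.
Proof.
  intros ha hrr hb hr hk1 hk12 hg1. pose proof ln2_pos as hl.
  unfold den_csi_opt, pow2, Rpower.
  apply (incr_function_le
    (fun k => 2 * sqrt (a * k * (exp (r / k * ln 2) - 1)) * sqrt rr + k * b) (Finite k1) (Finite k2)
    (fun k => let y := r / k * ln 2 in let e := exp y in let u := y * e - e + 1 in
       b - a * u * sqrt rr / sqrt (a * k * (e - 1)))); simpl; try lra.
  - intros k hk _.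
    assert (hy : 0 < r / k * ln 2) by (apply Rmult_lt_0_compat; [apply Rdiv_lt_0_compat|]; lra).
    destruct (exp_lower_bounds _ hy) as [he _].
    assert (hA : 0 < a * k * (exp (r / k * ln 2) - 1)) by (apply Rmult_lt_0_compat; nra).
    pose proof (sqrt_lt_R0 _ hA).
    auto_derive; [repeat split; lra|].
    unfold Rminus, Rdiv in *. field. lra.
  - intros k hk _.
    set (y := r / k * ln 2).
    assert (hy : 0 < y) by (apply Rmult_lt_0_compat; [apply Rdiv_lt_0_compat|]; lra).
    destruct (exp_lower_bounds y hy) as [he hu].
    set (e := exp y) in *. set (u := y * e - e + 1) in *.
    (* the hypothesis at [k1] propagates to [k >= k1] because [g^2] is increasing *)
    assert (hgk : g_sq_ln2 y < b ^ 2 * r * ln 2 / (a * rr)).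
    { assert (hrk : r / k <= r / k1)
        by (apply Rmult_le_compat_l; [lra|apply Rinv_le_contravar; lra]).
      pose proof (g_sq_le (r / k) (r / k1) ltac:(apply Rdiv_lt_0_compat; lra) hrk).
      rewrite g_sqE in H by (apply Rdiv_lt_0_compat; lra).
      replace (b ^ 2 * r * ln 2 / (a * rr)) with (b ^ 2 * r / (a * rr) * ln 2)
        by (field; lra).
      apply Rle_lt_trans with (g (r / k1) ^ 2 * ln 2); [exact (proj1 (Rle_div_l _ _ _ hl) H)|].
      apply Rmult_lt_compat_r; lra. }
    assert (hkey : a * rr * u ^ 2 < b ^ 2 * k * (e - 1)).
    { unfold g_sq_ln2 in hgk. fold e u in hgk.
      replace k with (r * ln 2 / y) by (unfold y; field; lra).
      apply (Rmult_lt_reg_r y); [lra|].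
      replace (a * rr * u ^ 2 * y) with (y * u ^ 2 / (e - 1) * (a * rr) * (e - 1))
        by (field; lra).
      replace (b ^ 2 * (r * ln 2 / y) * (e - 1) * y)
        with (b ^ 2 * r * ln 2 / (a * rr) * (a * rr) * (e - 1)) by (field; nra).
      apply Rmult_lt_compat_r; [lra|]. apply Rmult_lt_compat_r; nra. }
    assert (hA : 0 < a * k * (e - 1)) by (apply Rmult_lt_0_compat; nra).
    pose proof (sqrt_lt_R0 _ hA) as hsA. pose proof (sqrt_lt_R0 _ hrr) as hsr.
    pose proof (sqrt_sqrt rr ltac:(lra)) as Hsr.
    pose proof (sqrt_sqrt (a * k * (e - 1)) ltac:(lra)) as HsA.
    set (sr := sqrt rr) in *. set (sA := sqrt (a * k * (e - 1))) in *.
    assert (a * u * sr < b * sA).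
    { apply Rsqr_incrst_0; [|apply Rmult_le_pos; [apply Rmult_le_pos|]; lra|nra].
      unfold Rsqr.
      replace (a * u * sr * (a * u * sr)) with (a * (a * rr * u ^ 2))
        by (rewrite <- Hsr; ring).
      replace (b * sA * (b * sA)) with (a * (b ^ 2 * k * (e - 1)))
        by (transitivity (b ^ 2 * (sA * sA)); [rewrite HsA|]; ring).
      apply Rmult_lt_compat_l; lra. }
    assert (a * u * sr / sA < b) by (apply Rlt_div_l; lra).
    lra.
Qed.

Lemma den_csi_improve (th : Theta) (R0 M K : R) :
  alpha th > 0 -> rho_r th > 0 -> rho_d th > 0 -> R0 > 0 ->
  rho_r th > 3 * alpha th / (4 * (1 + beta th) ^ 2 * R0)
             * (g (4 * R0 / (3 * Kmax th))) ^ 2 ->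
  1 <= K -> K <= Kmax th -> M > K ->
  exists M' K', 1 <= K' /\ K' <= Kmax th /\ M' > K' /\
    den_csi M' K' (4 * R0 / 3) th <= 4 / 3 * den_csi M K R0 th - rho_s th / 3.
Proof.
  intros ha hr hd hR hg hK1 hKm hMK.
  pose proof (den_csi_scale_le th M K R0 (4 / 3) ha ltac:(lra) hMK ltac:(lra) ltac:(lra))
    as hscale.
  replace (4 / 3 * R0) with (4 * R0 / 3) in hscale by field.
  replace (4 / 3 - 1) with (1 / 3) in hscale by field.
  destruct (Rle_or_lt K (3 * Kmax th / 4)) as [hsmall|hlarge].
  - exists (4 / 3 * M), (4 / 3 * K). repeat split; lra.
  - set (r := 4 * R0 / 3) in *.
    destruct (den_csi_opt_attained th (Kmax th) r ha hr ltac:(lra) ltac:(unfold r; lra))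
      as [M' [hM' Heq]].
    exists M', (Kmax th). repeat split; try lra.
    assert (hcond : g (r / Kmax th) ^ 2
                    < (rho_r th + rho_d th) ^ 2 * r / (alpha th * rho_r th)).
    { replace (r / Kmax th) with (4 * R0 / (3 * Kmax th)) by (unfold r; field; lra).
      unfold beta in hg.
      set (X := 3 * alpha th / (4 * (1 + rho_d th / rho_r th) ^ 2 * R0)) in hg.
      assert (hX : 0 < X).
      { assert (0 < 1 + rho_d th / rho_r th)
          by (pose proof (Rdiv_lt_0_compat _ _ hd hr); lra).
        pose proof (pow_lt _ 2 H). apply Rdiv_lt_0_compat; nra. }
      replace ((rho_r th + rho_d th) ^ 2 * r / (alpha th * rho_r th)) with (rho_r th / X)
        by (unfold X, r; field; repeat split; lra).
      apply (proj1 (Rlt_div_r (g (4 * R0 / (3 * Kmax th)) ^ 2) _ _ hX)). lra. }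
    pose proof (den_csi_opt_lt (alpha th) (rho_r th) (rho_r th + rho_d th) r
                  (Kmax th) (4 / 3 * K) ha hr ltac:(lra) ltac:(unfold r; lra)
                  ltac:(lra) ltac:(lra) hcond).
    pose proof (den_csi_ge_opt th (4 / 3 * M) (4 / 3 * K) r ha hr ltac:(lra) ltac:(lra)
                  ltac:(unfold r; lra)).
    lra.
Qed.

Lemma zeta_csi'_finite (th : Theta) (r : R) :
  alpha th > 0 -> rho_r th > 0 -> rho_d th > 0 -> rho_s th > 0 -> 1 <= Kmax th -> r > 0 ->
  exists s, zeta_csi' r th = Finite s /\ 0 < s.
Proof.
  intros ha hr hd hs hK hr0.
  pose proof (den_csi_ge_rho_s th 2 1 r ha hr hd ltac:(lra) ltac:(lra) ltac:(lra)).
  destruct (Lub_Rbar_finite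
              (fun z => exists M K, 1 <= K /\ K <= Kmax th /\ M > K /\ z = zeta_csi M K r th)
              (zeta_csi 2 1 r th) (r / rho_s th)) as [s [Hs Hz0]].
  - exists 2, 1. repeat split; lra.
  - intros z [M [K [hK1 [hKm [hMK ->]]]]]. rewrite zeta_csiE.
    pose proof (den_csi_ge_rho_s th M K r ha hr hd ltac:(lra) hMK ltac:(lra)).
    apply Rmult_le_compat_l; [lra|]. apply Rinv_le_contravar; lra.
  - exists s. split; [exact Hs|].
    rewrite zeta_csiE in Hz0.
    assert (0 < r / den_csi 2 1 r th) by (apply Rdiv_lt_0_compat; lra). lra.
Qed.

Lemma zeta_zf'_gt_zeta_csi' (th : Theta) (R0 s : R) :
  R0 > 0 -> alpha th > 0 -> rho_r th > 0 -> rho_d th > 0 -> rho_s th > 0 -> rho_0 th > 0 ->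
  rho_s th > alpha th / 2 ->
  zeta_csi' (4 * R0 / 3) th = Finite s -> 0 < s ->
  Rbar_lt (3 / 8 * s) (zeta_zf' R0 th).
Proof.
  intros hR ha hr hd hs h0 hsa Hs hs0.
  replace (3 / 8 * s) with (R0 / (2 * (4 * R0 / 3)) * s) by (field; lra).
  apply (Lub_Rbar_lt_of_den_gain _ _ s (4 * R0 / 3) R0 2 (rho_s th - alpha th / 2)
           Hs hs0 ltac:(lra) hR ltac:(lra) ltac:(lra)).
  intros z [M [K [hK1 [hKm [hMK ->]]]]] _.
  destruct (den_zf_quarter_le th M K R0 ha hr hd hs h0 ltac:(lra) hKm hMK ltac:(lra))
    as [hpos hle].
  pose proof (den_csi_ge_rho_s th M K (4 * R0 / 3) ha hr hd ltac:(lra) hMK ltac:(lra)).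
  exists (den_zf M K (TT th / 4) R0 th). repeat split; [|exact hpos|].
  - exists M, K, (TT th / 4). rewrite zeta_zfE.
    pose proof (Kmax_bounds th K hr hd h0 hKm). repeat split; lra.
  - rewrite zeta_csiE.
    replace (4 * R0 / 3 / (4 * R0 / 3 / den_csi M K (4 * R0 / 3) th))
      with (den_csi M K (4 * R0 / 3) th) by (field; lra).
    exact hle.
Qed.

Lemma zeta_csi'_lt_rate (th : Theta) (R0 s s' : R) :
  R0 > 0 -> alpha th > 0 -> rho_r th > 0 -> rho_d th > 0 -> rho_s th > 0 ->
  rho_r th > 3 * alpha th / (4 * (1 + beta th) ^ 2 * R0)
             * (g (4 * R0 / (3 * Kmax th))) ^ 2 ->
  zeta_csi' R0 th = Finite s -> 0 < s -> zeta_csi' (4 * R0 / 3) th = Finite s' ->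
  s < s'.
Proof.
  intros hR ha hr hd hs hg Hs hs0 Hs'.
  pose proof (Lub_Rbar_lt_of_den_gain _
                (fun z => exists M K, 1 <= K /\ K <= Kmax th /\ M > K /\
                   z = zeta_csi M K (4 * R0 / 3) th)
                s R0 (4 * R0 / 3) (4 / 3) (rho_s th / 3) Hs hs0 hR ltac:(lra)
                ltac:(lra) ltac:(lra)) as Hgain.
  unfold zeta_csi' in Hs'. rewrite Hs' in Hgain. simpl in Hgain.
  replace (4 * R0 / 3 / (4 / 3 * R0) * s) with s in Hgain by (field; lra).
  apply Hgain.
  intros z [M [K [hK1 [hKm [hMK ->]]]]] _.
  destruct (den_csi_improve th R0 M K ha hr hd hR hg hK1 hKm hMK)
    as [M' [K' [hK1' [hKm' [hMK' hle]]]]].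
  pose proof (den_csi_ge_rho_s th M K R0 ha hr hd ltac:(lra) hMK ltac:(lra)).
  pose proof (den_csi_ge_rho_s th M' K' (4 * R0 / 3) ha hr hd ltac:(lra) hMK' ltac:(lra)).
  exists (den_csi M' K' (4 * R0 / 3) th). repeat split; [exists M', K'; auto|lra|].
  rewrite zeta_csiE.
  replace (R0 / (R0 / den_csi M K R0 th)) with (den_csi M K R0 th) by (field; lra).
  lra.
Qed.

Theorem lemma7 (Rr : R) (th : Theta) :
  Rr > 0 ->
  alpha th > 1 -> rho_r th > 0 -> rho_d th > 0 -> rho_s th > 0 ->
  rho_0 th > 0 -> TT th > 1 ->
  Kmax th > 10 ->
  rho_r th > alpha th / (2 * delta th) ->
  rho_r th > 3 * alpha th / (4 * (1 + beta th) ^ 2 * Rr)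
             * (g (4 * Rr / (3 * Kmax th))) ^ 2 ->
  rho_r th < alpha th / (1 + beta th) ^ 2 * ((g Rr) ^ 2 / Rr) ->
  Rbar_lt (Rbar_mult (Finite (3 / 8)) (zeta_csi' (4 * Rr / 3) th)) (zeta_zf' Rr th) /\
  Rbar_lt (Rbar_mult (Finite (3 / 8)) (zeta_csi' Rr th))
          (Rbar_mult (Finite (3 / 8)) (zeta_csi' (4 * Rr / 3) th)).
Proof.
  intros hR ha hr hd hs h0 hT hK hdelta hg _.
  assert (hsa : rho_s th > alpha th / 2).
  { unfold delta in hdelta.
    replace (alpha th / (2 * (rho_s th / rho_r th))) with (alpha th / (2 * rho_s th) * rho_r th)
      in hdelta by (field; lra).
    assert (alpha th / (2 * rho_s th) < 1) by nra.
    apply Rlt_div_l in H; lra. }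
  destruct (zeta_csi'_finite th (4 * Rr / 3) ltac:(lra) hr hd hs ltac:(lra) ltac:(lra))
    as [s' [Hs' hs']].
  destruct (zeta_csi'_finite th Rr ltac:(lra) hr hd hs ltac:(lra) hR) as [s [Hs hs0]].
  rewrite Hs', Hs. simpl. split.
  - exact (zeta_zf'_gt_zeta_csi' th Rr s' hR ltac:(lra) hr hd hs h0 hsa Hs' hs').
  - pose proof (zeta_csi'_lt_rate th Rr s s' hR ltac:(lra) hr hd hs hg Hs hs0 Hs'). lra.
Qed.
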